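(* Let $\mathcal{M}$ be an RKHS of functions of $(a,w,x)$ with kernel $K_{\mathcal{M}}$ and $\mathcal{G}$ an RKHS of functions of $(a,z,x)$ with kernel $K_{\mathcal{G}}$, each with its canonical RKHS norm, and let $\lambda_m,\gamma_m,\lambda_g,\gamma_g>0$. Given data $\{(a_i,z_i,w_i,x_i,y_i)\}_{i=1}^n$, define $\Phi^n_q(q,m;p)=\frac1n\sum_i\big(q(a_i,z_i,x_i)-\frac1{p(a_i\mid w_i,x_i)}\big)m(a_i,w_i,x_i)$ and $\Phi^n_h(h,g)=\frac1n\sum_i(y_i-h(a_i,w_i,x_i))g(a_i,z_i,x_i)$, and let $K_{\mathcal{M},n}=(K_{\mathcal{M}}((a_i,w_i,x_i),(a_j,w_j,x_j)))_{i,j=1}^n$, $K_{\mathcal{G},n}=(K_{\mathcal{G}}((a_i,z_i,x_i),(a_j,z_j,x_j)))_{i,j=1}^n$, $\psi_{q,n}=\big(\frac1n(q(a_i,z_i,x_i)-\frac1{p(a_i\mid w_i,x_i)})\big)_{i=1}^n$, $\psi_{h,n}=\big(\frac1n(y_i-h(a_i,w_i,x_i))\big)_{i=1}^n$. Then for any $q,h$, $$\max_{m\in\mathcal{M}}\Phi^n_q-\lambda_m\|m\|_{2,n}^2-\gamma_m\|m\|_{\mathcal{M}}^2=\frac1{4\gamma_m}\psi_{q,n}^\top K_{\mathcal{M},n}\Big(\frac{\lambda_m}{\gamma_m}\frac1nK_{\mathcal{M},n}+I\Big)^{-1}\psi_{q,n}=\frac1{4\gamma_m}\psi_{q,n}^\top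 K_{\mathcal{M},n}^{1/2}\Big(\frac{\lambda_m}{\gamma_m}\frac1nK_{\mathcal{M},n}+I\Big)^{-1}K_{\mathcal{M},n}^{1/2}\psi_{q,n},$$ $$\max_{g\in\mathcal{G}}\Phi^n_h-\lambda_g\|g\|_{2,n}^2-\gamma_g\|g\|_{\mathcal{G}}^2=\frac1{4\gamma_g}\psi_{h,n}^\top K_{\mathcal{G},n}\Big(\frac{\lambda_g}{\gamma_g}\frac1nK_{\mathcal{G},n}+I\Big)^{-1}\psi_{h,n}=\frac1{4\gamma_g}\psi_{h,n}^\top K_{\mathcal{G},n}^{1/2}\Big(\frac{\lambda_g}{\gamma_g}\frac1nK_{\mathcal{G},n}+I\Big)^{-1}K_{\mathcal{G},n}^{1/2}\psi_{h,n}.$$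
   Context: $\|m\|_{2,n}^2=\frac1n\sum_i m^2(a_i,w_i,x_i)$ and $\|g\|_{2,n}^2=\frac1n\sum_i g^2(a_i,z_i,x_i)$; $p(a\mid w,x)$ is a (given) conditional density of $A$ given $(W,X)$; $I$ is the $n\times n$ identity matrix. *)

From HB Require Import structures.
From mathcomp Require Import all_boot all_order all_algebra.
From mathcomp Require Import reals.
From Stdlib Require Import ClassicalEpsilon.
Set Implicit Arguments. Unset Strict Implicit. Unset Printing Implicit Defensive.
Import Order.TTheory GRing.Theory Num.Theory.
Local Open Scope ring_scope.

Section RKHS.
Variable R : realType.

Definition is_RKHS (T : Type) (K : T -> T -> R) (H : (T -> R) -> Prop)
    (ip : (T -> R) -> (T -> R) -> R) : Prop :=
      H (fun _ => 0)
    /\ (forall (c : R) f g, H f -> H g -> H (fun t => c * f t + g t))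
    /\
      (forall f g, H f -> H g -> ip f g = ip g f)
    /\ (forall (c : R) f g k, H f -> H g -> H k ->
         ip (fun t => c * f t + g t) k = c * ip f k + ip g k)
    /\ (forall f, H f -> f <> (fun _ => 0) -> 0 < ip f f)
    /\
      (forall u : nat -> T -> R, (forall k, H (u k)) ->
        (forall e : R, 0 < e -> exists N, forall k l, (N <= k)%N -> (N <= l)%N ->
           ip (fun t => u k t - u l t) (fun t => u k t - u l t) < e) ->
        exists2 f, H f & forall e : R, 0 < e -> exists N, forall k, (N <= k)%N ->
           ip (fun t => u k t - f t) (fun t => u k t - f t) < e)
    /\
      (forall t, H (fun s => K s t))
    /\ (forall f t, H f -> f t = ip f (fun s => K s t)).

Definition gram_mx (T : Type) (K : T -> T -> R) n (pts : 'I_n -> T) : 'M[R]_n :=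
  \matrix_(i, j) K (pts i) (pts j).

Definition psd_mx n (S : 'M[R]_n) : Prop :=
  S^T = S /\ forall v : 'cV[R]_n, 0 <= (v^T *m S *m v) ord0 ord0.

Definition mx_sqrt n (S : 'M[R]_n) : 'M[R]_n :=
  epsilon (inhabits 0) (fun Q : 'M[R]_n => psd_mx Q /\ Q *m Q = S).

Definition qform n (u : 'cV[R]_n) (A : 'M[R]_n) (v : 'cV[R]_n) : R :=
  (u^T *m A *m v) ord0 ord0.

End RKHS.

(* Both maximisations are instances of one problem: maximise L m - b(m, m)
   over an RKHS H, where L m = sum_i psi_i m(t_i) and
   b(f, g) = lam c sum_i f(t_i) g(t_i) + gam <f, g> is a symmetric positive
   semidefinite form on H.  The kernel combination m0 = sum_j al_j K(., t_j)
   with al = (2 gam)^-1 ((lam c / gam) K_n + I)^-1 psi represents L through b,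
   L m = 2 b(m0, m), so completing the square gives
   L m - b(m, m) = b(m0, m0) - b(m - m0, m - m0) <= b(m0, m0) = psi^T K_n al / 2.
   Only finite kernel combinations occur.
   For the square-root form, any square root Q of K_n commutes with K_n, hence
   with the resolvent.  A positive semidefinite square root exists: K_n is
   unitarily diagonalisable over R[i] with nonnegative eigenvalues, and
   Q = p(K_n) for a real polynomial p interpolating the square root on them. *)

From HB Require Import structures.
From mathcomp Require Import all_boot all_order all_algebra.
From mathcomp Require Import reals complex ring boolp.
From Stdlib Require Import ClassicalEpsilon.
Set Implicit Arguments.
Unset Strict Implicit.
Unset Printing Implicit Defensive.

Import Order.TTheory GRing.Theory Num.Theory.
Local Open Scope ring_scope.
Local Open Scope complex_scope.

Lemma exists_poly_interp (F : fieldType) (f : F -> F) (s : seq F) :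
  exists p : {poly F}, {in s, forall x, p.[x] = f x}.
Proof.
elim: s => [|y s [p hp]]; first by exists 0.
have [ys|ys] := boolP (y \in s).
  by exists p => x; rewrite inE => /orP[/eqP->|]; apply: hp.
pose P := \prod_(z <- s) ('X - z%:P).
have Ps x : x \in s -> P.[x] = 0.
  move=> xs; apply/eqP; rewrite horner_prod prodf_seq_eq0.
  by apply/hasP; exists x; rewrite //= hornerXsubC subrr.
have Py : P.[y] != 0.
  rewrite horner_prod prodf_seq_neq0; apply/allP => z zs /=.
  by rewrite hornerXsubC subr_eq0; apply: contraNneq ys => ->.
exists (p + ((f y - p.[y]) / P.[y]) *: P) => x; rewrite inE hornerD hornerZ.
case/orP => [/eqP->|xs]; first by rewrite mulfVK // addrC subrK.
by rewrite (Ps x xs) mulr0 addr0 hp.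
Qed.

Lemma horner_mx_sym (R : comNzRingType) n (K : 'M[R]_n.+1) p :
  K^T = K -> (horner_mx K p)^T = horner_mx K p.
Proof.
move=> Ksym; elim/poly_ind: p => [|p c IH]; first by rewrite rmorph0 trmx0.
rewrite rmorphD rmorphM /= horner_mx_X horner_mx_C linearD /= tr_scalar_mx -mulmxE.
by rewrite trmx_mul IH Ksym (comm_mx_horner _ (comm_mx_refl K)).
Qed.

Lemma mulmx_tr_gt0 (R : realDomainType) n (a : 'rV[R]_n) :
  a != 0 -> 0 < (a *m a^T) 0 0.
Proof.
move=> a0; have sq_ge0 k : 0 <= a 0 k * a^T k 0 by rewrite mxE -expr2 sqr_ge0.
rewrite mxE lt_def sumr_ge0 ?andbT //; apply: contra a0.
move=> /eqP/(psumr_eq0P (fun k _ => sq_ge0 k)) a2_0; apply/eqP/rowP => k.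
by have /eqP := a2_0 k isT; rewrite !mxE mulf_eq0 orbb => /eqP->.
Qed.

Lemma psd_eigenvalue_ge0 (R : realType) n (K : 'M[R]_n) (a : 'rV[R]_n) (r : R) :
  psd_mx K -> a != 0 -> a *m K = r *: a -> 0 <= r.
Proof.
move=> [_ Kpsd] a0 ea; have := Kpsd a^T.
rewrite trmxK ea -scalemxAl mxE pmulr_lge0 //; exact: mulmx_tr_gt0.
Qed.

Lemma real_eigenvector (R : rcfType) n (K : 'M[R]_n) (u : 'rV[R[i]]_n) (r : R) :
  u != 0 -> u *m map_mx (real_complex R) K = r%:C *: u ->
  exists2 a : 'rV[R]_n, a != 0 & a *m K = r *: a.
Proof.
move=> u0 eu.
have eig_part (phi : {additive R[i] -> R}) :
    (forall z k, phi (z * k%:C) = phi z * k) ->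
    map_mx phi u *m K = r *: map_mx phi u.
  move=> phiM; apply/rowP => j; have /rowP/(_ j) := eu; rewrite !mxE => /(congr1 phi).
  rewrite raddf_sum mulrC phiM mulrC => <-.
  by apply: eq_bigr => l _; rewrite !mxE phiM.
pose Re_u := map_mx (@complex.Re R) u; pose Im_u := map_mx (@complex.Im R) u.
have [Re0|] := eqVneq Re_u 0; last first.
  move=> Re0; exists Re_u => //; apply: (eig_part (@complex.Re R : {additive _ -> _})).
  by move=> [a b] k /=; rewrite mulr0 subr0.
have [Im0|] := eqVneq Im_u 0; last first.
  move=> Im0; exists Im_u => //; apply: (eig_part (@complex.Im R : {additive _ -> _})).
  by move=> [a b] k /=; rewrite mulr0 add0r.
case/eqP: u0; apply/rowP => k; have /rowP/(_ k) := Re0; have /rowP/(_ k) := Im0.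
rewrite !mxE => Im_k Re_k.
by rewrite (complexE (u 0 k)) Re_k Im_k mulr0 addr0.
Qed.

Lemma psd_spectral (R : realType) n (K : 'M[R]_n) : psd_mx K ->
  exists U (r : 'I_n -> R), [/\ U \in unitmx,
    map_mx (real_complex R) K = invmx U *m diag_mx (\row_j (r j)%:C) *m U
    & forall j, 0 <= r j].
Proof.
move=> Kpsd; have [Ksym _] := Kpsd; pose KC := map_mx (real_complex R) K.
have KCherm : KC \is hermsymmx.
  apply/is_hermitianmxP; rewrite expr0 scale1r; apply/matrixP => i j.
  by rewrite !mxE -{1}Ksym mxE; apply/esym/CrealP/complex_realP; eexists.
have eK : KC = invmx (spectralmx KC) *m diag_mx (spectral_diag KC) *m spectralmx KC.
  exact/orthomx_spectralP/(hermitian_normalmx KCherm).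
have Uu := spectral_unit KC.
have d_real := hermitian_spectral_diag_real KCherm.
move: eK Uu d_real; set U := spectralmx KC; set d := spectral_diag KC => eK Uu d_real.
pose r j := complex.Re (d 0 j).
have dr : d = \row_j (r j)%:C.
  apply/rowP => j; rewrite mxE /r RRe_real //.
  exact: (mxOverP d_real).
exists U, r; split; rewrite -?dr // => j.
have eig : row j U *m KC = (r j)%:C *: row j U.
  have UK : U *m KC = diag_mx d *m U by rewrite eK !mulmxA mulmxV // mul1mx.
  by rewrite -row_mul UK mul_diag_mx dr; apply/rowP => k; rewrite !mxE.
have u0 : row j U != 0.
  apply: contraTneq Uu => u0; rewrite unitmxE unitfE negbK; apply/det0P.
  exists (delta_mx 0 j); last by rewrite -rowE.
  by apply/eqP => /matrixP/(_ 0 j); rewrite !mxE !eqxx /= => /eqP; rewrite oner_eq0.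
have [a a0 ea] := real_eigenvector u0 eig.
exact: psd_eigenvalue_ge0 Kpsd a0 ea.
Qed.

Lemma eq_horner_mx_spectrum (R : rcfType) n (K : 'M[R]_n.+1) (U : 'M[R[i]]_n.+1)
    (r : 'I_n.+1 -> R) (p1 p2 : {poly R}) :
  U \in unitmx ->
  map_mx (real_complex R) K = invmx U *m diag_mx (\row_j (r j)%:C) *m U ->
  (forall j, p1.[r j] = p2.[r j]) -> horner_mx K p1 = horner_mx K p2.
Proof.
move=> Uu eK e12; apply: (@map_mx_inj _ _ (real_complex R)).
rewrite !map_horner_mx eK !horner_mx_uconjC // !horner_mx_diag.
by congr (_ *m diag_mx _ *m _); apply/rowP => j; rewrite !mxE !horner_map /= e12.
Qed.

Lemma psd_sqrt_exists (R : realType) n (K : 'M[R]_n) :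
  psd_mx K -> exists Q, psd_mx Q /\ Q *m Q = K.
Proof.
case: n K => [|n] K Kpsd.
  exists 0; split; last by apply/matrixP => -[].
  by split => [|v]; rewrite ?trmx0 // mulmx0 mul0mx mxE.
have [Ksym _] := Kpsd; have [U [r [Uu eK r_ge0]]] := psd_spectral Kpsd.
have spectral_eq := eq_horner_mx_spectrum Uu eK.
have [p p_sqrt] := exists_poly_interp (fun t => Num.sqrt t) (codom r).
have [p4 p4_sqrt] := exists_poly_interp (fun t => Num.sqrt (Num.sqrt t)) (codom r).
have p_sqr : horner_mx K (p * p) = K.
  rewrite -[RHS]horner_mx_X; apply: spectral_eq => j.
  by rewrite hornerM hornerX p_sqrt ?codom_f // -expr2 sqr_sqrtr.
have p4_sqr : horner_mx K (p4 * p4) = horner_mx K p.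
  apply: spectral_eq => j.
  by rewrite hornerM !(p_sqrt, p4_sqrt) ?codom_f // -expr2 sqr_sqrtr ?sqrtr_ge0.
(* p4(K) is a symmetric square root of p(K), which is therefore PSD. *)
exists (horner_mx K p); split; last by rewrite -[RHS]p_sqr rmorphM.
split=> [|v]; first exact: horner_mx_sym.
rewrite -p4_sqr rmorphM /= -mulmxE; set P4 := horner_mx K p4.
have -> : v^T *m (P4 *m P4) *m v = (P4 *m v)^T *m (P4 *m v).
  by rewrite trmx_mul horner_mx_sym // !mulmxA.
by rewrite mxE; apply: sumr_ge0 => k _; rewrite mxE -expr2 sqr_ge0.
Qed.

Lemma mul_mx_sqrt (R : realType) n (S : 'M[R]_n) :
  psd_mx S -> mx_sqrt S *m mx_sqrt S = S.
Proof. by move=> /psd_sqrt_exists/(epsilon_spec (inhabits 0)) []. Qed.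

Lemma comm_mx_invmx (R : comUnitRingType) n (A B : 'M[R]_n) :
  comm_mx A B -> comm_mx (invmx A) B.
Proof.
move=> AB; have [Au|/invmx_out->//] := boolP (A \in unitmx).
by rewrite /comm_mx -{2}[B](mulKmx Au) AB !mulmxA mulmxK.
Qed.

Lemma sqrt_mul_invmx_resolvent (R : comUnitRingType) n (Q S : 'M[R]_n) (c : R) :
  Q *m Q = S ->
  Q *m invmx (c *: S + 1%:M) *m Q = S *m invmx (c *: S + 1%:M).
Proof.
move=> QQ; have QS : comm_mx (c *: S + 1%:M) Q.
  rewrite -QQ /comm_mx mulmxDl mulmxDr -scalemxAl -scalemxAr.
  by rewrite !mulmxA mul1mx mulmx1.
by rewrite -mulmxA (comm_mx_invmx QS) mulmxA QQ.
Qed.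

Lemma psd_resolvent_unit (R : realType) n (S : 'M[R]_n) (c : R) :
  psd_mx S -> 0 <= c -> c *: S + 1%:M \in unitmx.
Proof.
move=> [_ Spsd] c_ge0; rewrite unitmxE unitfE; apply/negP => /det0P [w w0 wM].
have : 0 < (w *m (c *: S + 1%:M) *m w^T) 0 0.
  rewrite mulmxDr mulmx1 mulmxDl mxE ltr_wpDl ?mulmx_tr_gt0 //.
  by rewrite -scalemxAr -scalemxAl mxE mulr_ge0 // -{1}[w]trmxK.
by rewrite wM mul0mx mxE ltxx.
Qed.

Section CompleteSquare.
Variables (R : numDomainType) (T : Type) (H : (T -> R) -> Prop).
Variable b : (T -> R) -> (T -> R) -> R.
Hypothesis H_memZD : forall c f g, H f -> H g -> H (fun t => c * f t + g t).
Hypothesis b_sym : forall f g, H f -> H g -> b f g = b g f.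
Hypothesis b_linl : forall c f g k, H f -> H g -> H k ->
  b (fun t => c * f t + g t) k = c * b f k + b g k.
Hypothesis b_ge0 : forall f, H f -> 0 <= b f f.

Lemma quadratic_max (L : (T -> R) -> R) f0 :
  H f0 -> (forall f, H f -> L f = 2 * b f0 f) ->
  L f0 - b f0 f0 = b f0 f0 /\ (forall f, H f -> L f - b f f <= b f0 f0).
Proof.
move=> Hf0 L_repr; split=> [|f Hf]; first by rewrite L_repr //; ring.
(* d := f - f0 satisfies b d d = b f f - 2 b f0 f + b f0 f0. *)
have Hd := H_memZD (-1) Hf0 Hf.
have bdd := b_linl (-1) Hf0 Hf Hd.
have bdf0 := b_linl (-1) Hf0 Hf Hf0.
have bdf := b_linl (-1) Hf0 Hf Hf.
rewrite (b_sym Hf0 Hd) (b_sym Hf Hd) bdf0 bdf (b_sym Hf Hf0) in bdd.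
rewrite L_repr // -subr_ge0; have := b_ge0 Hd; rewrite bdd.
by congr (0 <= _); ring.
Qed.

End CompleteSquare.

Section RKHS.
Variables (R : realType) (T : Type) (K : T -> T -> R) (H : (T -> R) -> Prop).
Variable ip : (T -> R) -> (T -> R) -> R.
Hypothesis hK : is_RKHS K H ip.

Lemma rkhs_mem0 : H (fun _ => 0).
Proof. by case: hK. Qed.

Lemma rkhs_memZD c f g : H f -> H g -> H (fun t => c * f t + g t).
Proof. by case: hK => _ [+ _]; apply. Qed.

Lemma rkhs_ipC f g : H f -> H g -> ip f g = ip g f.
Proof. by case: hK => _ [_ [+ _]]; apply. Qed.

Lemma rkhs_ipZDl c f g k : H f -> H g -> H k ->
  ip (fun t => c * f t + g t) k = c * ip f k + ip g k.
Proof. by case: hK => _ [_ [_ [+ _]]]; apply. Qed.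

Lemma rkhs_ip_gt0 f : H f -> f <> (fun _ => 0) -> 0 < ip f f.
Proof. by case: hK => _ [_ [_ [_ [+ _]]]]; apply. Qed.

Lemma rkhs_mem_kernel t : H (fun s => K s t).
Proof. by case: hK => _ [_ [_ [_ [_ [_ [+ _]]]]]]; apply. Qed.

Lemma rkhs_reproducing f t : H f -> f t = ip f (fun s => K s t).
Proof. by case: hK => _ [_ [_ [_ [_ [_ [_ +]]]]]]; apply. Qed.

Lemma rkhs_ip0l k : H k -> ip (fun _ => 0) k = 0.
Proof.
move=> Hk; have := rkhs_ipZDl 1 rkhs_mem0 rkhs_mem0 Hk.
have -> : (fun _ => 1 * 0 + 0) = (fun _ : T => 0 : R) by apply: funext => t; ring.
by rewrite mul1r => e; apply: (addrI (ip (fun _ => 0) k)); rewrite addr0 -e.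
Qed.

Lemma rkhs_ip_ge0 f : H f -> 0 <= ip f f.
Proof.
move=> Hf; have [->|f0] := pselect (f = fun _ => 0).
  by rewrite rkhs_ip0l //; exact: rkhs_mem0.
exact/ltW/rkhs_ip_gt0.
Qed.

Lemma rkhs_kernel_sym s t : K s t = K t s.
Proof.
rewrite (rkhs_reproducing s (rkhs_mem_kernel t)).
rewrite (rkhs_ipC (rkhs_mem_kernel t) (rkhs_mem_kernel s)).
by rewrite -(rkhs_reproducing t (rkhs_mem_kernel s)).
Qed.

Lemma rkhs_mem_sum (I : Type) (r : seq I) (al : I -> R) (F : I -> T -> R) :
  (forall j, H (F j)) -> H (fun s => \sum_(j <- r) al j * F j s).
Proof.
move=> HF; elim: r => [|j r IH].
  by under eq_fun do rewrite big_nil; exact: rkhs_mem0.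
by under eq_fun do rewrite big_cons; exact: rkhs_memZD.
Qed.

Lemma rkhs_ip_suml (I : Type) (r : seq I) (al : I -> R) (F : I -> T -> R) g :
  (forall j, H (F j)) -> H g ->
  ip (fun s => \sum_(j <- r) al j * F j s) g = \sum_(j <- r) al j * ip (F j) g.
Proof.
move=> HF Hg; elim: r => [|j r IH].
  by under eq_fun do rewrite big_nil; rewrite big_nil rkhs_ip0l.
under eq_fun do rewrite big_cons.
by rewrite rkhs_ipZDl ?IH ?big_cons //; exact: rkhs_mem_sum.
Qed.

Section KernelCombination.
Variables (n : nat) (t : 'I_n -> T).

Definition kernel_comb (al : 'cV[R]_n) : T -> R := fun s => \sum_j al j 0 * K s (t j).

Lemma mem_kernel_comb al : H (kernel_comb al).
Proof. exact: rkhs_mem_sum (fun j => rkhs_mem_kernel (t j)). Qed.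

Lemma ip_kernel_combl al f : H f -> ip (kernel_comb al) f = \sum_j al j 0 * f (t j).
Proof.
move=> Hf; rewrite rkhs_ip_suml //; last by move=> j; exact: rkhs_mem_kernel.
apply: eq_bigr => j _ /=.
by rewrite (rkhs_ipC (rkhs_mem_kernel _) Hf) -rkhs_reproducing.
Qed.

Lemma kernel_comb_sample al i : kernel_comb al (t i) = (gram_mx K t *m al) i 0.
Proof. by rewrite mxE; apply: eq_bigr => j _; rewrite mxE mulrC. Qed.

Lemma gram_mx_psd : psd_mx (gram_mx K t).
Proof.
split=> [|v]; first by apply/matrixP => i j; rewrite !mxE rkhs_kernel_sym.
rewrite -mulmxA mxE; under eq_bigr do rewrite mxE -kernel_comb_sample.
rewrite -ip_kernel_combl; [exact: rkhs_ip_ge0 (mem_kernel_comb v) | exact: mem_kernel_comb].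
Qed.

Variables (lam gam c : R).

Definition penalty_form (f g : T -> R) :=
  lam * c * \sum_i f (t i) * g (t i) + gam * ip f g.

Lemma penalty_form_sym f g : H f -> H g -> penalty_form f g = penalty_form g f.
Proof.
move=> Hf Hg; rewrite /penalty_form rkhs_ipC //.
by congr (_ * _ + _); apply: eq_bigr => i _; rewrite mulrC.
Qed.

Lemma penalty_formZDl a f g k : H f -> H g -> H k ->
  penalty_form (fun s => a * f s + g s) k = a * penalty_form f k + penalty_form g k.
Proof.
move=> Hf Hg Hk; rewrite /penalty_form rkhs_ipZDl //.
have -> : \sum_i (a * f (t i) + g (t i)) * k (t i) =
    a * \sum_i f (t i) * k (t i) + \sum_i g (t i) * k (t i).
  by rewrite mulr_sumr -big_split; apply: eq_bigr => i _ /=; ring.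
ring.
Qed.

Lemma penalty_form_ge0 f : 0 <= lam -> 0 <= gam -> 0 <= c -> H f -> 0 <= penalty_form f f.
Proof.
move=> lam_ge0 gam_ge0 c_ge0 Hf; rewrite addr_ge0 ?mulr_ge0 ?rkhs_ip_ge0 //.
by apply: sumr_ge0 => i _; rewrite -expr2 sqr_ge0.
Qed.

Lemma penalty_form_kernel_combl al f : H f ->
  penalty_form (kernel_comb al) f =
  \sum_i ((lam * c) *: (gram_mx K t *m al) + gam *: al) i 0 * f (t i).
Proof.
move=> Hf; rewrite /penalty_form ip_kernel_combl // !mulr_sumr -big_split.
by apply: eq_bigr => i _ /=; rewrite kernel_comb_sample !mxE; ring.
Qed.

Lemma regularized_max (psi : 'cV[R]_n) : 0 <= lam -> 0 < gam -> 0 <= c ->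
  let B := invmx ((lam / gam * c) *: gram_mx K t + 1%:M) in
  let v := (4 * gam)^-1 * qform psi (gram_mx K t *m B) psi in
  let obj m := \sum_i psi i 0 * m (t i) - lam * (c * \sum_i m (t i) ^+ 2) - gam * ip m m in
  (exists2 m, H m & obj m = v) /\ (forall m, H m -> obj m <= v).
Proof.
move=> lam_ge0 gam_gt0 c_ge0 B v obj; set G := gram_mx K t.
have gam_neq0 : gam != 0 by rewrite gt_eqF.
have Mu : (lam / gam * c) *: G + 1%:M \in unitmx.
  apply: psd_resolvent_unit; first exact: gram_mx_psd.
  by rewrite mulr_ge0 // divr_ge0 // ltW.
pose al := (2 * gam)^-1 *: (B *m psi).
have coef : (lam * c) *: (G *m al) + gam *: al = 2^-1 *: psi.
  have -> : (lam * c) *: (G *m al) + gam *: al =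
      gam *: (((lam / gam * c) *: G + 1%:M) *m al).
    rewrite mulmxDl mul1mx -scalemxAl scalerDr scalerA.
    by congr (_ *: _ + _); field.
  rewrite /al -scalemxAr mulmxA mulmxV // mul1mx scalerA.
  by congr (_ *: _); field.
have L_repr f : H f -> \sum_i psi i 0 * f (t i) = 2 * penalty_form (kernel_comb al) f.
  move=> Hf; rewrite penalty_form_kernel_combl // coef mulr_sumr.
  by apply: eq_bigr => i _; rewrite !mxE; field.
have objE m : obj m = \sum_i psi i 0 * m (t i) - penalty_form m m.
  rewrite /obj /penalty_form.
  under [X in lam * (c * X)]eq_bigr do rewrite expr2.
  ring.
have [max_val le_max] := quadratic_max rkhs_memZD
  penalty_form_sym penalty_formZDl
  (fun f => penalty_form_ge0 lam_ge0 (ltW gam_gt0) c_ge0) (mem_kernel_comb al) L_repr.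
have value : penalty_form (kernel_comb al) (kernel_comb al) = v.
  apply: (@mulfI _ 2); first by rewrite pnatr_eq0.
  rewrite -L_repr; last exact: mem_kernel_comb.
  under eq_bigr do rewrite kernel_comb_sample.
  have -> : \sum_i psi i 0 * (G *m al) i 0 = (psi^T *m (G *m al)) 0 0.
    by rewrite [RHS]mxE; apply: eq_bigr => i _; rewrite !mxE.
  rewrite /v /qform /al -2!scalemxAr mxE !mulmxA.
  by field.
split; first by exists (kernel_comb al); [exact: mem_kernel_comb | rewrite objE max_val].
by move=> m Hm; rewrite objE -value le_max.
Qed.

End KernelCombination.

End RKHS.

Theorem mainTheorem8 (R : realType) (A W Z X : Type)
    (KM : (A * W * X) -> (A * W * X) -> R)
    (MM : ((A * W * X) -> R) -> Prop) (ipM : ((A * W * X) -> R) -> ((A * W * X) -> R) -> R)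
    (KG : (A * Z * X) -> (A * Z * X) -> R)
    (GG : ((A * Z * X) -> R) -> Prop) (ipG : ((A * Z * X) -> R) -> ((A * Z * X) -> R) -> R)
    (hM : is_RKHS KM MM ipM) (hG : is_RKHS KG GG ipG)
    (lam_m gam_m lam_g gam_g : R)
    (hlm : 0 < lam_m) (hgm : 0 < gam_m) (hlg : 0 < lam_g) (hgg : 0 < gam_g)
    (n : nat) (hn : (0 < n)%N)
    (a : 'I_n -> A) (z : 'I_n -> Z) (w : 'I_n -> W) (x : 'I_n -> X) (y : 'I_n -> R)
    (p : A -> W -> X -> R)
    (q : (A * Z * X) -> R) (h : (A * W * X) -> R) :
  let awx := fun i => (a i, w i, x i) in
  let azx := fun i => (a i, z i, x i) in
  let Phi_q := fun m : (A * W * X) -> R =>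
    n%:R^-1 * \sum_(i < n) (q (azx i) - (p (a i) (w i) (x i))^-1) * m (awx i) in
  let Phi_h := fun g : (A * Z * X) -> R =>
    n%:R^-1 * \sum_(i < n) (y i - h (awx i)) * g (azx i) in
  let norm2n_M := fun m : (A * W * X) -> R => n%:R^-1 * \sum_(i < n) m (awx i) ^+ 2 in
  let norm2n_G := fun g : (A * Z * X) -> R => n%:R^-1 * \sum_(i < n) g (azx i) ^+ 2 in
  let objM := fun m => Phi_q m - lam_m * norm2n_M m - gam_m * ipM m m in
  let objG := fun g => Phi_h g - lam_g * norm2n_G g - gam_g * ipG g g in
  let KMn := gram_mx KM awx in
  let KGn := gram_mx KG azx in
  let psi_q : 'cV[R]_n := \col_i (n%:R^-1 * (q (azx i) - (p (a i) (w i) (x i))^-1)) in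
  let psi_h : 'cV[R]_n := \col_i (n%:R^-1 * (y i - h (awx i))) in
  let BM := invmx ((lam_m / gam_m * n%:R^-1) *: KMn + 1%:M) in
  let BG := invmx ((lam_g / gam_g * n%:R^-1) *: KGn + 1%:M) in
  let vM := (4 * gam_m)^-1 * qform psi_q (KMn *m BM) psi_q in
  let vG := (4 * gam_g)^-1 * qform psi_h (KGn *m BG) psi_h in
  [/\ (exists2 m, MM m & objM m = vM) /\ (forall m, MM m -> objM m <= vM),
      vM = (4 * gam_m)^-1 * qform psi_q (mx_sqrt KMn *m BM *m mx_sqrt KMn) psi_q,
      (exists2 g, GG g & objG g = vG) /\ (forall g, GG g -> objG g <= vG)
    & vG = (4 * gam_g)^-1 * qform psi_h (mx_sqrt KGn *m BG *m mx_sqrt KGn) psi_h].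
Proof.
move=> awx azx Phi_q Phi_h norm2n_M norm2n_G objM objG KMn KGn psi_q psi_h BM BG vM vG.
have n_ge0 : 0 <= n%:R^-1 :> R by rewrite invr_ge0.
have Phi_col (u : 'I_n -> R) (f : 'I_n -> R) :
    n%:R^-1 * \sum_i u i * f i = \sum_i (\col_i (n%:R^-1 * u i)) i 0 * f i.
  by rewrite mulr_sumr; apply: eq_bigr => i _; rewrite mxE mulrA.
have objME m :
    objM m = \sum_i psi_q i 0 * m (awx i) - lam_m * norm2n_M m - gam_m * ipM m m.
  by rewrite /objM /Phi_q Phi_col.
have objGE g :
    objG g = \sum_i psi_h i 0 * g (azx i) - lam_g * norm2n_G g - gam_g * ipG g g.
  by rewrite /objG /Phi_h Phi_col.
have [maxM leM] := regularized_max hM awx psi_q (ltW hlm) hgm n_ge0.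
have [maxG leG] := regularized_max hG azx psi_h (ltW hlg) hgg n_ge0.
split.
- split=> [|m Hm]; last by rewrite objME; exact: leM.
  by have [m Hm objm] := maxM; exists m; rewrite ?objME.
- by rewrite /vM /BM -(sqrt_mul_invmx_resolvent _ (mul_mx_sqrt (gram_mx_psd hM awx))).
- split=> [|g Hg]; last by rewrite objGE; exact: leG.
  by have [g Hg objg] := maxG; exists g; rewrite ?objGE.
- by rewrite /vG /BG -(sqrt_mul_invmx_resolvent _ (mul_mx_sqrt (gram_mx_psd hG azx))).
Qed.
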